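(* Let $p$ be a prime, let $G$ be a cyclic group of order $p$, and let $S$ be an unsplittable minimal zero-sum sequence over $G$. Let $T$ be a subsequence of $S$ with $|\operatorname{supp}(T)|\ge 2$. Then there exists $g\in\operatorname{supp}(T)$ such that $|\Sigma(g^{-1}T)|\ge 2|g^{-1}T|-1$, where $g^{-1}T$ denotes the sequence $T$ with one copy of $g$ removed.
   Context: A sequence over $G$ is a finite unordered list of elements of $G$ with repetition allowed; $|T|$ is the length, $\sigma(T)$ the sum of terms, and $\operatorname{supp}(T)$ the set of elements occurring. $T$ is a subsequence of $S$ if each element occurs in $T$ at most as often as in $S$. $\Sigma(T)$ is the set of sums $\sigma(U)$ over all subsequences $U$ of $T$ with $|U|\ge1$. $S$ is a minimal zero-sum sequence if $\sigma(S)=0$ and no subsequence $U$ with $1\le|U|<|S|$ has $\sigma(U)=0$. A minimal zero-sum sequence $S$ is unsplittable if there do not exist $h\in\operatorname{supp}(S)$ and $y,z\in G$ with $y+z=h$ such that the sequence obtained from $S$ by replacing one copy of $h$ with the two terms $y,z$ is again a minimal zero-sum sequence. *)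

From mathcomp Require Import all_boot all_order all_algebra.
Set Implicit Arguments. Unset Strict Implicit. Unset Printing Implicit Defensive.
Import GRing.Theory.
Local Open Scope ring_scope.

(* Sequences over G are represented by lists (seq G), considered up to order:
   all notions below depend only on multiplicities. *)
Section Seqs.
Variable G : finZmodType.

Definition sigma (S : seq G) : G := \sum_(x <- S) x.

Definition supp (S : seq G) : {set G} := [set x in S].

Definition subseqm (T S : seq G) : Prop :=
  forall x : G, (count_mem x T <= count_mem x S)%N.

Definition sub_sum (S : seq G) (I : {set 'I_(size S)}) : G :=
  \sum_(i < size S | i \in I) nth 0 S i.

Definition Sigma (T : seq G) : {set G} :=
  [set sub_sum I | I : {set 'I_(size T)} & I != set0].

Definition minimal_zero_sum (S : seq G) : Prop :=
  sigma S = 0 /\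
  forall I : {set 'I_(size S)}, I != set0 -> I != setT -> sub_sum I != 0.

Definition unsplittable (S : seq G) : Prop :=
  minimal_zero_sum S /\
  ~ (exists h y z : G, [/\ h \in S, y + z = h & minimal_zero_sum (y :: z :: rem h S)]).
End Seqs.

(* Unsplittability of S gives
   that every element of G is a subsum of h^-1 S for each term h: otherwise,
   for a missing c, splitting h into -c and h + c keeps the sequence minimal.
   The core estimate is |subsums U| >= 2|U| for a part U of S that takes two
   distinct values and leaves at least two terms of S out.  It is proved by
   induction: removing a term w from U, either the number of subsums grows by
   at least 2, or (small doubling in Z/p) subsums U is the progression
   {0, w, ..., (N-1)w}; the latter cannot happen for two distinct w, because
   the sum w * C(N, 2) of the progression determines w.  The shape c d^k is
   treated directly, unsplittability ruling out c = e d.  For T = S one uses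
   instead |subsums (g^-1 S)| = p and the bound 2|S| <= p + 2 that the core
   estimate gives when applied to S minus two distinct terms. *)

From mathcomp Require Import all_boot all_order all_algebra all_fingroup.
From mathcomp Require Import cyclic zify.
Set Implicit Arguments. Unset Strict Implicit. Unset Printing Implicit Defensive.
Import GRing.Theory FinRing.Theory.
Local Open Scope ring_scope.

Section Nonconstant.
Variable T : eqType.
Implicit Types (s : seq T) (a b c d x y z : T).

Lemma perm_rem_cons x s t : perm_eq s (x :: t) -> perm_eq (rem x s) t.
Proof.
move=> sxt; have xs : x \in s by rewrite (perm_mem sxt) mem_head.
by rewrite -(perm_cons x) -(permPr sxt) perm_sym perm_to_rem.
Qed.

Lemma mem_rem_self x s : (1 < count_mem x s)%N -> x \in rem x s.
Proof.
move=> x2; have xs : x \in s by rewrite -has_pred1 has_count ltnW.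
by rewrite -has_pred1 has_count count_rem xs /= eqxx subn_gt0.
Qed.

Lemma nonconstantP s :
  reflect (exists a b, [/\ a \in s, b \in s & a != b]) (~~ constant s).
Proof.
apply: (iffP idP) => [|[a [b [sa sb ab]]]].
  case: s => [|x s] // /allPn[y ys /= yx].
  by exists y, x; rewrite mem_head inE ys orbT.
apply/negP => /(constantP a)[x sx]; move: sa sb ab; rewrite sx.
by move=> /nseqP[-> _] /nseqP[-> _]; rewrite eqxx.
Qed.

Lemma perm_single_nseq a b s : a \in s -> (count_mem a s <= 1)%N ->
  {subset s <= [:: a; b]} -> perm_eq s (a :: nseq (size s).-1 b).
Proof.
move=> sa a1 sab; rewrite (permPl (perm_to_rem sa)) perm_cons -(size_rem sa).
have a0 : a \notin rem a s.
  by apply/count_memPn; rewrite count_rem sa /= eqxx; apply/eqP; rewrite subn_eq0.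
suff /all_pred1P <- : all (pred1 b) (rem a s) by [].
apply/allP => x xs; have := sab x (mem_rem xs).
by rewrite !inE => /orP[/eqP xa | //]; move: xs; rewrite xa (negbTE a0).
Qed.

Lemma nonconstant_cases s : ~~ constant s ->
  (exists c d k, [/\ c != d, (0 < k)%N & perm_eq s (c :: nseq k d)]) \/
  (exists y z, [/\ y != z, y \in s, z \in s, ~~ constant (rem y s)
                & ~~ constant (rem z s)]).
Proof.
case/nonconstantP => a [b [sa sb ab]]; have ba : b != a by rewrite eq_sym.
have [[c sc /andP[ca cb]] | sab] :=
  altP (@hasP _ (fun c => (c != a) && (c != b)) s).
  right; exists b, c; split=> //; first by rewrite eq_sym.
    by apply/nonconstantP; exists a, c; rewrite !rem_mem // eq_sym.
  by apply/nonconstantP; exists a, b; rewrite !rem_mem // eq_sym.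
have {}sab : {subset s <= [:: a; b]}.
  move=> x xs; apply/negPn/negP; rewrite !inE negb_or => xab.
  by case/hasP: sab; exists x.
have shape x y : x \in s -> y \in s -> x != y -> (count_mem x s <= 1)%N ->
    {subset s <= [:: x; y]} -> exists c d k,
      [/\ c != d, (0 < k)%N & perm_eq s (c :: nseq k d)].
  move=> sx sy xy x1 sxy; exists x, y, (size s).-1; split=> //.
    have yx : y \in rem x s by rewrite rem_mem // eq_sym.
    by rewrite -(size_rem sx); case: (rem x s) yx.
  exact: perm_single_nseq.
have [a1 | a2] := leqP (count_mem a s) 1; first by left; apply: shape sa sb ab a1 sab.
have [b1 | b2] := leqP (count_mem b s) 1.
  by left; apply: shape sb sa ba b1 _ => x /sab; rewrite !inE orbC.
right; exists a, b; split=> //; apply/nonconstantP.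
  by exists a, b; rewrite mem_rem_self ?rem_mem.
by exists a, b; rewrite mem_rem_self ?rem_mem.
Qed.

Lemma nonconstant_rem s : (2 < size s)%N -> ~~ constant s ->
  exists2 x, x \in s & ~~ constant (rem x s).
Proof.
move=> s3 /nonconstant_cases[[c [d [k [cd _ sck]]]] | [y [_ [_ sy _ ry _]]]]; last first.
  by exists y.
have d2 : (1 < count_mem d s)%N.
  move: s3; rewrite (seq.permP sck) (perm_size sck) /= count_nseq /= eqxx (negbTE cd).
  rewrite size_nseq; lia.
exists d; first by rewrite -has_pred1 has_count ltnW.
apply/nonconstantP; exists c, d; rewrite mem_rem_self // rem_mem //.
by rewrite (perm_mem sck) mem_head.
Qed.

Lemma nonconstant_rem2 s : (3 < size s)%N -> ~~ constant s ->
    (forall c d k, c != d -> ~ perm_eq s (c :: nseq k d)) ->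
  exists g x, [/\ g \in s, x \in rem g s, g != x & ~~ constant (rem x (rem g s))].
Proof.
move=> s4 /nonconstantP[a [b [sa sb ab]]] noshape.
have single x : x \in s -> (count_mem x s <= 1)%N ->
    exists g x, [/\ g \in s, x \in rem g s, g != x & ~~ constant (rem x (rem g s))].
  move=> sx x1; have r3 : (2 < size (rem x s))%N by rewrite size_rem //; lia.
  have xr : x \notin rem x s.
    by apply/count_memPn; rewrite count_rem sx /= eqxx; apply/eqP; rewrite subn_eq0.
  have ncr : ~~ constant (rem x s).
    apply/negP => /(constantP x)[e re].
    have er : e \in rem x s by rewrite re mem_nseq eqxx andbT; lia.
    apply: (noshape x e (size (rem x s))).
      by apply: contraNneq xr => xe; rewrite {1}xe.
    by rewrite -re perm_to_rem.
  have [y ry ncy] := nonconstant_rem r3 ncr.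
  by exists x, y; split=> //; apply: contraNneq xr => xy; rewrite {1}xy.
have [a1 | a2] := leqP (count_mem a s) 1; first exact: single a sa a1.
have [b1 | b2] := leqP (count_mem b s) 1; first exact: single b sb b1.
have ba : b != a by rewrite eq_sym.
exists a, b; split; rewrite ?rem_mem //; apply/nonconstantP; exists a, b; split=> //.
  by rewrite rem_mem // mem_rem_self.
by rewrite mem_rem_self // count_rem sa /= eq_sym (negbTE ba) subn0.
Qed.

End Nonconstant.

Section Subsums.
Variable G : finZmodType.
Implicit Types (s t u : seq G) (x y a : G).

Lemma sigma_nil : sigma [::] = 0 :> G.
Proof. by rewrite /sigma big_nil. Qed.

Lemma sigma_cons x s : sigma (x :: s) = x + sigma s.
Proof. by rewrite /sigma big_cons. Qed.

Lemma sigma_cat s t : sigma (s ++ t) = sigma s + sigma t.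
Proof. by rewrite /sigma big_cat. Qed.

Lemma perm_sigma s t : perm_eq s t -> sigma s = sigma t.
Proof. by move=> st; rewrite /sigma (perm_big _ st). Qed.

Lemma sigma_nseq k x : sigma (nseq k x) = x *+ k.
Proof.
by elim: k => [|k IH]; rewrite ?sigma_nil // [nseq _ _]/= sigma_cons IH mulrS.
Qed.

Fixpoint subsums s : {set G} :=
  if s is x :: s' then subsums s' :|: [set x + a | a in subsums s'] else [set 0].

Lemma perm_cons_cat x s t u :
  perm_eq s (t ++ u) -> perm_eq (x :: s) (t ++ x :: u).
Proof. by move=> stu; rewrite perm_sym (perm_catCA t [:: x]) perm_cons perm_sym. Qed.

Lemma perm_cons_rem x t u : x \in t -> perm_eq (t ++ u) (x :: (rem x t ++ u)).
Proof. by move=> xt; rewrite -cat_cons perm_cat2r perm_to_rem. Qed.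

Lemma perm_cat_rem x t u : x \in u -> perm_eq (t ++ u) (x :: (t ++ rem x u)).
Proof.
move=> xu; rewrite perm_sym; apply: perm_trans (perm_cons_cat x (perm_refl _)) _.
by rewrite perm_cat2l perm_sym perm_to_rem.
Qed.

Lemma mem_subsums s t u : perm_eq s (t ++ u) -> sigma t \in subsums s.
Proof.
elim: s t u => [|x s IH] t u /=.
  by case: t => [|y t] /perm_size //= _; rewrite sigma_nil inE.
move=> st; have := mem_head x s; rewrite (perm_mem st) mem_cat => /orP[xt | xu].
  have := perm_trans st (perm_cons_rem u xt); rewrite perm_cons => /IH ?.
  by rewrite (perm_sigma (perm_to_rem xt)) sigma_cons inE imset_f ?orbT.
have := perm_trans st (perm_cat_rem t xu); rewrite perm_cons => /IH.
by rewrite inE => ->.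
Qed.

Lemma subsumsP s a :
  reflect (exists t u, perm_eq s (t ++ u) /\ sigma t = a) (a \in subsums s).
Proof.
apply: (iffP idP) => [|[t [u [st <-]]]]; last exact: mem_subsums st.
elim: s a => [|x s IH] a /=.
  by rewrite inE => /eqP ->; exists [::], [::]; rewrite sigma_nil.
rewrite inE => /orP[/IH [t [u [st <-]]] | /imsetP [b /IH [t [u [st <-]]] ->]].
  by exists t, (x :: u); rewrite perm_cons_cat.
by exists (x :: t), u; rewrite sigma_cons perm_cons.
Qed.

Lemma perm_subsums s s' : perm_eq s s' -> subsums s = subsums s'.
Proof.
move=> ss'; apply/setP => a.
apply/subsumsP/subsumsP => -[t [u [st <-]]]; exists t, u.
  by rewrite -(permPl ss').
by rewrite (permPl ss').
Qed.

Lemma subsums0 s : 0 \in subsums s.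
Proof. by rewrite -sigma_nil; apply: (mem_subsums (u := s)). Qed.

Lemma subsums_cat s1 s2 a : a \in subsums (s1 ++ s2) ->
  exists a1 a2, [/\ a1 \in subsums s1, a2 \in subsums s2 & a = a1 + a2].
Proof.
elim: s1 a => [|x s1 IH] a /= => [|/setUP[]].
- by exists 0, a; rewrite inE add0r.
- by case/IH=> a1 [a2 [? ? ->]]; exists a1, a2; rewrite inE; split=> //; apply/orP; left.
case/imsetP=> b /IH [a1 [a2 [? ? ->]] ->].
by exists (x + a1), a2; rewrite addrA inE imset_f ?orbT.
Qed.

Definition zero_sum_free s :=
  forall t u, perm_eq s (t ++ u) -> sigma t = 0 -> t = [::].

Lemma perm_zero_sum_free s s' :
  perm_eq s s' -> zero_sum_free s -> zero_sum_free s'.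
Proof. by move=> ss' zsf t u; rewrite -(permPl ss'); apply: zsf. Qed.

Lemma zero_sum_free_neq0 s x : zero_sum_free s -> x \in s -> x != 0.
Proof.
move=> zsf xs; apply/eqP => x0.
by have := zsf [:: x] _ (perm_to_rem xs); rewrite /sigma big_seq1 => /(_ x0).
Qed.

Lemma zero_sum_free_cons x s :
  zero_sum_free (x :: s) <-> zero_sum_free s /\ - x \notin subsums s.
Proof.
split=> [zsf | [zsf xs] t u xtu t0].
  split=> [t u stu t0 | ].
    exact: zsf (perm_cons_cat x stu) t0.
  apply/subsumsP => -[t [u [stu tx]]].
  by have := zsf (x :: t) u; rewrite perm_cons sigma_cons tx subrr => /(_ stu erefl).
have := mem_head x s; rewrite (perm_mem xtu) mem_cat => /orP[xt | xu].
  rewrite (perm_sigma (perm_to_rem xt)) sigma_cons in t0.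
  have := perm_trans xtu (perm_cons_rem u xt); rewrite perm_cons => /mem_subsums.
  by rewrite -[sigma _](addKr x) t0 addr0 (negbTE xs).
by have := perm_trans xtu (perm_cat_rem t xu); rewrite perm_cons => /zsf; apply.
Qed.

Lemma sub_sum_split s (I : {set 'I_(size s)}) :
  exists t u, [/\ perm_eq s (t ++ u), sigma t = sub_sum I & size t = #|I|].
Proof.
pose part (A : {set 'I_(size s)}) := [seq nth 0 s i | i : 'I_(size s) <- enum A].
exists (part I), (part (~: I)); split.
- rewrite -map_cat -[s in perm_eq s](take_size s) -(map_nth_iota0 0) //.
  rewrite -val_enum_ord -map_comp perm_map // enumT -(perm_filterC (mem I)).
  rewrite /enum_mem perm_cat2l.
  by apply/seq.permP => P; congr count; apply: eq_filter => i; rewrite !inE.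
- by rewrite /sigma big_map big_enum.
- by rewrite size_map -cardE.
Qed.

Lemma split_sub_sum s t u : perm_eq s (t ++ u) ->
  exists I : {set 'I_(size s)}, sub_sum I = sigma t /\ #|I| = size t.
Proof.
move=> stu; have [_ /subseqP[m sm ->] tm] : exists2 s', subseq s' s & perm_eq t s'.
  by apply/count_subseqP => x; rewrite (seq.permP stu) count_cat leq_addr.
exists [set i : 'I_(size s) | nth false m i].
rewrite (perm_sigma tm) (perm_size tm) -[size (mask _ _)]sum1_size -sum1_card.
rewrite /sigma !big_mask.
split; apply: eq_big => [i|i _]; rewrite ?inE ?andbT //.
by rewrite (tnth_nth 0).
Qed.

Lemma card_subsums_Sigma s : (#|subsums s| <= #|Sigma s|.+1)%N.
Proof.
have sub : subsums s \subset 0 |: Sigma s.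
  apply/subsetP => _ /subsumsP[[|x t] [u [stu <-]]]; first by rewrite sigma_nil setU11.
  have [I [<- cardI]] := split_sub_sum stu.
  by rewrite setU1r // imset_f // inE -card_gt0 cardI.
by apply: leq_trans (subset_leq_card sub) _; rewrite cardsU1 -add1n leq_add2r leq_b1.
Qed.

Lemma minimal_zero_sumP s : minimal_zero_sum s <->
  sigma s = 0 /\ forall t u, perm_eq s (t ++ u) -> sigma t = 0 -> t = [::] \/ u = [::].
Proof.
have setT_card (I : {set 'I_(size s)}) : (I == setT) = (#|I| == size s).
  by have := max_card I; rewrite card_ord eqEcard subsetT cardsT card_ord eqn_leq => ->.
split=> -[s0 mins]; split=> //.
  move=> t u stu t0.
  case: t u stu t0 => [|x t] [|y u] stu t0; [by left | by left | by right | exfalso].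
  have [I [It cardI]] := split_sub_sum stu.
  have IT : I != setT.
    by rewrite setT_card cardI (perm_size stu) size_cat /=; apply/eqP; lia.
  by have := mins I; rewrite -card_gt0 cardI It t0 eqxx => /(_ isT IT).
move=> I I0 IT; have [t [u [stu <- cardt]]] := sub_sum_split I.
apply/eqP => t0; case: (mins t u stu t0) => [t_nil | u_nil].
  by move: I0; rewrite -card_gt0 -cardt t_nil.
by move: IT; rewrite setT_card -cardt (perm_size stu) u_nil cats0 eqxx.
Qed.

Lemma minimal_zero_sum_cons x s :
  minimal_zero_sum (x :: s) <-> sigma (x :: s) = 0 /\ zero_sum_free s.
Proof.
rewrite minimal_zero_sumP; split=> -[s0 mins]; split=> // t u stu t0.
  by case: (mins _ _ (perm_cons_cat x stu) t0).
have := mem_head x s; rewrite (perm_mem stu) mem_cat => /orP[xt | xu].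
  right; apply: (mins u (rem x t)).
    have := perm_trans stu (perm_cons_rem u xt).
    by rewrite perm_cons => /permPl ->; rewrite perm_catC.
  by move: s0; rewrite (perm_sigma stu) sigma_cat t0 add0r.
left; apply: (mins t (rem x u)) t0.
by rewrite -(perm_cons x) (perm_trans stu (perm_cat_rem t xu)).
Qed.

Lemma zero_sum_free_part s t u :
  minimal_zero_sum s -> perm_eq s (t ++ u) -> u != [::] -> zero_sum_free t.
Proof.
move=> /minimal_zero_sumP[_ mins] stu u0 t1 t2 tt t0.
have : perm_eq s (t1 ++ t2 ++ u) by rewrite (permPl stu) catA perm_cat2r.
case/mins/(_ t0) => // /eqP.
by rewrite -size_eq0 size_cat addn_eq0 !size_eq0 (negbTE u0) andbF.
Qed.

Lemma unsplittable_subsums_rem s h :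
  unsplittable s -> h \in s -> subsums (rem h s) = [set: G].
Proof.
move=> [mins nosplit] hs; apply/setP => c; rewrite inE; apply/negbNE/negP => cW.
set W := rem h s; have hW : perm_eq s (h :: W) := perm_to_rem hs.
have sW : sigma W = - h.
  by apply/eqP; rewrite -addr_eq0 addrC -sigma_cons -(perm_sigma hW) mins.1.
apply: nosplit; exists h, (- c), (h + c); split=> //; first by rewrite addrCA addNr addr0.
apply/minimal_zero_sum_cons; split.
  by rewrite !sigma_cons sW addrA [- c + _]addrCA addNr addr0 subrr.
apply/zero_sum_free_cons; split.
  apply: (zero_sum_free_part (u := [:: h])) mins _ _ => //.
  by rewrite (permPl hW) perm_sym perm_catC.
apply/subsumsP => -[t [u [Wtu th]]].
have : sigma u \in subsums W.
  by apply: (mem_subsums (u := t)); rewrite (permPl Wtu) perm_sym perm_catC.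
have -> : sigma u = c.
  move/perm_sigma: Wtu; rewrite sigma_cat sW th => sWtu.
  by rewrite -[sigma u](addKr (- (h + c))) -sWtu opprK addrAC subrr add0r.
by rewrite (negbTE cW).
Qed.

Definition multiples y n : {set G} := [set y *+ i | i : 'I_n].

Lemma multiplesP y n x :
  reflect (exists2 i, (i < n)%N & x = y *+ i) (x \in multiples y n).
Proof.
apply: (iffP imsetP) => [[i _ ->] | [i ltin ->]]; first by exists i.
by exists (Ordinal ltin).
Qed.

Lemma card_multiples_le y n : (#|multiples y n| <= n)%N.
Proof. by rewrite (leq_trans (leq_imset_card _ _)) ?card_ord. Qed.

Lemma multiplesS y n :
  multiples y n.+2 = multiples y n.+1 :|: [set y + a | a in multiples y n.+1].
Proof.
apply/setP => x; apply/multiplesP/setUP.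
  case=> -[|i] lti ->; [left | right].
    by apply/multiplesP; exists 0%N.
  by apply/imsetP; exists (y *+ i); [apply/multiplesP; exists i | rewrite mulrS].
case=> [/multiplesP[i lti ->] | /imsetP[_ /multiplesP[i lti ->] ->]].
  by exists i => //; apply: ltnW.
by exists i.+1; rewrite ?mulrS.
Qed.

Lemma subsums_nseq k y : subsums (nseq k y) = multiples y k.+1.
Proof.
elim: k => [|k IH]; last by rewrite [LHS]/= IH multiplesS.
apply/setP => x; rewrite inE; apply/eqP/multiplesP => [-> | [[|i] // _ ->]].
by exists 0%N.
Qed.

Lemma cons_nseq_split c d e l : c = d *+ e -> (1 < e)%N -> (l <= e)%N ->
  exists t u, [/\ perm_eq (c :: nseq e d) (t ++ u), t != [::], u != [::]
                & sigma t = d *+ l.+1].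
Proof.
move=> cde e1 le; case: (ltnP l e) => [lte | el].
  exists (nseq l.+1 d), (c :: nseq (e - l.+1) d); split=> //; last exact: sigma_nseq.
  by apply: perm_cons_cat; rewrite -nseqD subnKC.
have -> : l = e by apply/eqP; rewrite eqn_leq le el.
exists [:: c; d], (nseq e.-1 d); split=> //.
- by rewrite -(prednK (ltnW e1)).
- by case: e e1 {cde le el} => [|[|e]].
- by rewrite !sigma_cons sigma_nil addr0 cde -mulrSr.
Qed.

Lemma subseqm_perm_cat s t : subseqm t s -> exists u, perm_eq s (t ++ u).
Proof.
case/count_subseqP => s' /perm_to_subseq[u ss'u] ts'.
by exists u; rewrite (permPl ss'u) perm_cat2r perm_sym.
Qed.

End Subsums.

Section PrimeOrder.
Variables (p : nat) (G : finZmodType).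
Hypotheses (p_pr : prime p) (cardG : #|[set: G]| = p).
Implicit Types (x y z : G) (A B : {set G}).

Lemma order_prime y : y != 0 -> #[y]%g = p.
Proof.
move=> y0; have := order_dvdG (in_setT y); rewrite cardG.
by apply/(prime_nt_dvdP p_pr); rewrite order_eq1.
Qed.

Lemma mulrn_eq0_dvd y k : y != 0 -> (y *+ k == 0) = (p %| k)%N.
Proof. by move=> y0; rewrite -(order_prime y0) order_dvdn zmodXgE zmod1gE. Qed.

Lemma mulrn_p y : y *+ p = 0.
Proof.
have [-> | y0] := eqVneq y 0; first by rewrite mul0rn.
by apply/eqP; rewrite mulrn_eq0_dvd.
Qed.

Lemma mulrn_predp y : y *+ p.-1 = - y.
Proof. by apply/eqP; rewrite -addr_eq0 -mulrSr prednK ?prime_gt0 ?mulrn_p. Qed.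

Lemma mulrn_inj y i j : y != 0 -> (i < p)%N -> (j < p)%N -> y *+ i = y *+ j -> i = j.
Proof.
move=> y0 ip jp yij; apply/eqP.
rewrite -(modn_small ip) -(modn_small jp) -(order_prime y0).
by rewrite -eq_expg_mod_order !zmodXgE yij.
Qed.

Lemma mulrn_onto y x : y != 0 -> exists2 k, (k < p)%N & x = y *+ k.
Proof.
move=> y0; have : x \in <[y]>%g.
  suff -> : <[y]>%g = [set: G] by rewrite in_setT.
  by apply/eqP; rewrite eqEcard subsetT cardG -(order_prime y0) leqnn.
case/cycleP => i ->; exists (i %% p)%N; first by rewrite ltn_mod prime_gt0.
by rewrite -zmodXgE -(order_prime y0) expg_mod_order.
Qed.

Lemma card_ltp A : A != [set: G] -> (#|A| < p)%N.
Proof. by move=> AT; rewrite -cardG proper_card // properEneq AT subsetT. Qed.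

Lemma card_avoid2 A a b : a != b -> a \notin A -> b \notin A -> (#|A|.+2 <= p)%N.
Proof.
move=> ab aA bA; rewrite -cardG.
apply: leq_trans (subset_leq_card (subsetT (a |: (b |: A)))).
by rewrite !cardsU1 !inE negb_or ab aA bA.
Qed.

Lemma zero_sum_free_nseq k y : zero_sum_free (nseq k y) -> (k < p)%N.
Proof.
move=> zsf; rewrite ltnNge; apply/negP => pk.
have := zsf (nseq p y) (nseq (k - p) y); rewrite -nseqD subnKC // sigma_nseq mulrn_p.
move=> /(_ (perm_refl _) erefl) /(congr1 size) /=; rewrite size_nseq.
by move: (prime_gt0 p_pr); lia.
Qed.

Lemma card_multiples y n : y != 0 -> (n <= p)%N -> #|multiples y n| = n.
Proof.
move=> y0 np; rewrite card_imset ?card_ord // => i j /mulrn_inj ij.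
by apply/val_inj/ij; rewrite // (leq_trans (ltn_ord _) np).
Qed.

Lemma sum_multiples y n : y != 0 -> (n <= p)%N ->
  \sum_(x in multiples y n) x = y *+ 'C(n, 2).
Proof.
move=> y0 np; rewrite big_imset /=; last first.
  by move=> i j _ _ /mulrn_inj ij; apply/val_inj/ij; rewrite // (leq_trans (ltn_ord _) np).
by rewrite sumrMnr -bin2_sum big_mkord.
Qed.

Lemma multiples_inj y z n : y != 0 -> z != 0 -> (1 < n < p)%N ->
  multiples y n = multiples z n -> y = z.
Proof.
move=> y0 z0 /andP[n1 np] yz; apply/eqP; rewrite -subr_eq0; apply/negP => /negP yz0.
have : \sum_(x in multiples y n) x = \sum_(x in multiples z n) x by rewrite yz.
rewrite (sum_multiples y0 (ltnW np)) (sum_multiples z0 (ltnW np)) => /eqP.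
rewrite -subr_eq0 -mulrnBl mulrn_eq0_dvd // => /(dvdn_mulr 2).
rewrite mulnC mul_bin_left bin1 Euclid_dvdM //.
by case/orP => /dvdn_leq; lia.
Qed.

(* With e least such that e y is not in B, the elements of B outside
   {0, ..., (e-1)y} are closed under adding y, hence there are none. *)
Lemma small_doubling_multiples y B : y != 0 -> 0 \in B -> - y \notin B ->
  (#|B :|: [set (y + b)%R | b in B]| <= #|B|.+1)%N -> B = multiples y #|B|.
Proof.
move=> y0 B0 yB growth; set C := [set y + b | b in B].
have [e eB mine] : exists2 e, y *+ e \notin B & forall m, y *+ m \notin B -> (e <= m)%N.
  have exP : exists e, y *+ e \notin B by exists p.-1; rewrite mulrn_predp.
  by case: (ex_minnP exP) => e; exists e.
have ep : (e < p)%N.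
  by have := mine p.-1; rewrite mulrn_predp => /(_ yB); have := prime_gt1 p_pr; lia.
have e0 : (0 < e)%N by case: e eB {mine ep} => //; rewrite mulr0n B0.
set M := multiples y e.
have MB : M \subset B.
  by apply/subsetP => _ /multiplesP[i ie ->]; apply/negPn/negP => /mine; lia.
have ye_pred : y *+ e = y *+ e.-1 + y by rewrite -mulrSr prednK.
have ye_C : y *+ e \in C.
  rewrite ye_pred addrC imset_f // (subsetP MB) //.
  by apply/multiplesP; exists e.-1; rewrite ?ltn_predL.
have C_B c : c \in C -> c \notin B -> c = y *+ e.
  move=> cC cB; apply/eqP/negP => /negP ce; move: growth; apply/negP; rewrite -ltnNge.
  have sub : c |: (y *+ e |: B) \subset B :|: C.
    apply/subsetP => x; rewrite !inE => /or3P[/eqP -> | /eqP -> | ->] //.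
      by rewrite cC orbT.
    by rewrite ye_C orbT.
  apply: leq_trans (subset_leq_card sub).
  by rewrite !cardsU1 !inE negb_or ce cB eB.
set D := B :\: M.
have D_step x : x \in D -> x + y \in D.
  rewrite !inE => /andP[xM xB].
  have xyB : x + y \in B.
    apply/negPn/negP => xyB; move/negP: xM; apply.
    have /C_B/(_ xyB) : x + y \in C by rewrite addrC imset_f.
    by rewrite ye_pred => /addIr ->; apply/multiplesP; exists e.-1; rewrite ?ltn_predL.
  rewrite xyB andbT; apply: contra xM => /multiplesP[[|i] ie].
    rewrite mulr0n => /eqP; rewrite addr_eq0 => /eqP xy.
    by move: xB; rewrite xy (negbTE yB).
  by rewrite mulrSr => /addIr ->; apply/multiplesP; exists i => //; apply: ltnW.
have BM : B \subset M.
  apply/subsetP => x xB; apply/negPn/negP => xM.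
  have [j _ jx] := mulrn_onto (- x) y0.
  have : x + y *+ j \in D.
    elim: j {jx} => [|j IH]; first by rewrite addr0 !inE xM xB.
    by rewrite mulrSr addrA D_step.
  rewrite -jx subrr inE => /andP[/negP[]].
  by apply/multiplesP; exists 0%N; rewrite ?mulr0n.
have BeM : B = M by apply/eqP; rewrite eqEsubset BM MB.
by rewrite [in #|B|]BeM card_multiples // ltnW.
Qed.

Lemma subsums_cons_dichotomy x s : x != 0 -> - x \notin subsums s ->
  (#|subsums s|.+2 <= #|subsums (x :: s)|)%N \/
  subsums (x :: s) = multiples x #|subsums (x :: s)|.
Proof.
move=> x0 xs; rewrite [subsums (x :: s)]/=; set B := subsums s.
have Bp : (#|B| < p)%N by apply: card_ltp; apply: contraNneq xs => BT; rewrite -/B BT inE.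
have [n Bn] : exists n, #|B| = n.+1.
  by exists #|B|.-1; rewrite prednK // card_gt0; apply/set0Pn; exists 0; apply: subsums0.
have [growth | growth] := leqP #|B :|: [set x + b | b in B]| #|B|.+1; [right | by left].
have := small_doubling_multiples x0 (subsums0 s) xs growth; rewrite -/B Bn => ->.
by rewrite -multiplesS card_multiples // -Bn.
Qed.

End PrimeOrder.

Section UnsplittableSubsums.
Variables (p : nat) (G : finZmodType) (S : seq G).
Hypotheses (p_pr : prime p) (cardG : #|[set: G]| = p).
Hypothesis minS : minimal_zero_sum S.
Hypothesis fullS : forall h, h \in S -> subsums (rem h S) = [set: G].
Implicit Types (U R : seq G) (c d : G).

Lemma subsums_part_neqT U R :
  perm_eq S (U ++ R) -> (1 < size R)%N -> subsums U != [set: G].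
Proof.
case: R => [|w [|w' R]] // SUR _.
have : zero_sum_free (w :: U).
  apply: (zero_sum_free_part (u := w' :: R)) minS _ _ => //.
  by rewrite (permPl SUR) (perm_catCA U [:: w]).
by case/zero_sum_free_cons => _; apply: contraNneq => ->; rewrite inE.
Qed.

(* If c = e d, decompose -d = b + r with b a subsum of d^e and r one of R:
   a part of c d^e summing to d + b, together with r, is a proper zero sum. *)
Lemma cons_nseq_neq_multiple c d e R : perm_eq S ((c :: nseq e d) ++ R) ->
  R != [::] -> (1 < e)%N -> c != d *+ e.
Proof.
move=> SR R0 e1; apply/eqP => cde; case/minimal_zero_sumP: (minS) => _ mins.
have cS : c \in S by rewrite (perm_mem SR) mem_head.
have := in_setT (- d); rewrite -(fullS cS) (perm_subsums (perm_rem_cons SR)).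
case/subsums_cat => b [r [bd /subsumsP[r1 [r2 [Rr <-]]] dbr]].
move: bd; rewrite subsums_nseq => /multiplesP[l le bl].
have [t [u [ctu t0 u0 st]]] := cons_nseq_split cde e1 le.
have : perm_eq S ((t ++ r1) ++ (u ++ r2)).
  by rewrite (permPl SR) perm_sym perm_catACA perm_sym perm_cat.
move/mins; rewrite sigma_cat st mulrS -bl -addrA -dbr subrr => /(_ erefl).
by case=> /eqP; rewrite -size_eq0 size_cat addn_eq0 !size_eq0 ?(negbTE t0) ?(negbTE u0).
Qed.

Lemma card_subsums_cons_nseq c d k R : perm_eq S ((c :: nseq k d) ++ R) ->
  R != [::] -> c != d -> (0 < k)%N -> (2 * k.+1 <= #|subsums (c :: nseq k d)|)%N.
Proof.
move=> SR R0 cd k0; have zsf := zero_sum_free_part minS SR R0.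
have d0 : d != 0 by apply: zero_sum_free_neq0 zsf _; rewrite inE mem_nseq k0 eqxx orbT.
have kp : (k < p)%N by case/zero_sum_free_cons: zsf => /(zero_sum_free_nseq p_pr cardG).
set P := multiples d k.+1.
have disj : P :&: [set c + a | a in P] = set0.
  apply/setP => x; rewrite in_setI in_set0; apply/negbTE/andP.
  case=> /multiplesP[i ik ->] /imsetP[_ /multiplesP[j jk ->] dij].
  have [ij | ji] := leqP i j.
    have ck : c :: nseq k d = (c :: nseq (j - i) d) ++ nseq (k - (j - i)) d.
      by rewrite /= -nseqD subnKC //; lia.
    have := zsf (c :: nseq (j - i) d) (nseq (k - (j - i)) d).
    rewrite -ck perm_refl sigma_cons sigma_nseq mulrnBr // dij addrA subrr.
    by move=> /(_ isT erefl).
  have cij : c = d *+ (i - j) by rewrite mulrnBr ?(ltnW ji) // dij addrK.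
  have e1 : (1 < i - j)%N.
    by rewrite ltn_neqAle subn_gt0 ji andbT; apply: contraNneq cd; rewrite cij => <-.
  have SR' : perm_eq S ((c :: nseq (i - j) d) ++ (nseq (k - (i - j)) d ++ R)).
    by rewrite catA /= -nseqD subnKC //; lia.
  have R0' : nseq (k - (i - j)) d ++ R != [::].
    by case: (nseq _ _) => //; case: R R0 {SR SR'}.
  by move/negP: (cons_nseq_neq_multiple SR' R0' e1); rewrite cij.
rewrite [subsums _]/= subsums_nseq cardsU disj cards0 subn0.
by rewrite (card_imset _ (addrI c)) (card_multiples p_pr cardG d0 kp) mul2n -addnn.
Qed.

Lemma card_subsums_part U R : perm_eq S (U ++ R) -> (1 < size R)%N ->
  ~~ constant U -> (2 * size U <= #|subsums U|)%N.
Proof.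
have [n] := ubnP (size U); elim: n U R => // n IH U R /ltnSE Un SUR R1 ncU.
have R0 : R != [::] by case: R R1 {SUR}.
have zsfU := zero_sum_free_part minS SUR R0.
have [[c [d [k [cd k0 Uck]]]] | [y [z [yz yU zU ncy ncz]]]] := nonconstant_cases ncU.
  rewrite (perm_subsums Uck) (perm_size Uck) /= size_nseq.
  apply: (card_subsums_cons_nseq (R := R)) cd k0 => //.
  by apply: perm_trans SUR _; rewrite perm_cat2r.
have grow w : w \in U -> ~~ constant (rem w U) ->
    (2 * size U <= #|subsums U|)%N \/ subsums U = multiples w #|subsums U|.
  move=> wU ncw; have Uw := perm_to_rem wU.
  have sizeU : size U = (size (rem w U)).+1 := perm_size Uw.
  have IHw : (2 * size (rem w U) <= #|subsums (rem w U)|)%N.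
    apply: (IH _ (w :: R) _ _ (ltnW R1) ncw); first by rewrite -ltnS -sizeU.
    exact: perm_trans SUR (perm_trans (perm_cons_rem R wU) (perm_cons_cat w (perm_refl _))).
  have [_ wW] := (zero_sum_free_cons w (rem w U)).1 (perm_zero_sum_free Uw zsfU).
  have w0 := zero_sum_free_neq0 zsfU wU.
  rewrite (perm_subsums Uw).
  case: (subsums_cons_dichotomy p_pr cardG w0 wW) => [grown | ?]; [left | by right].
  by apply: leq_trans grown; rewrite sizeU mulnS add2n !ltnS.
have [//|Uy] := grow y yU ncy; have [//|Uz] := grow z zU ncz.
have y0 := zero_sum_free_neq0 zsfU yU; have z0 := zero_sum_free_neq0 zsfU zU.
case/negP: yz; apply/eqP/(multiples_inj p_pr cardG y0 z0 _ (etrans (esym Uy) Uz)).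
rewrite (card_ltp cardG (subsums_part_neqT SUR R1)) andbT.
apply/card_gt1P; exists 0, y; split; rewrite ?subsums0 1?eq_sym //.
by have := @mem_subsums _ _ [:: y] _ (perm_to_rem yU); rewrite /sigma big_seq1.
Qed.

Lemma not_perm_cons_nseq c d k : c != d -> ~ perm_eq S (c :: nseq k d).
Proof.
move=> cd Sck; have cS : c \in S by rewrite (perm_mem Sck) mem_head.
have zsf : zero_sum_free (nseq k d).
  apply: (zero_sum_free_part (u := [:: c])) minS _ _ => //.
  by rewrite (permPl Sck) perm_sym perm_catC.
have kp := zero_sum_free_nseq p_pr cardG zsf.
have pk : (p <= k.+1)%N.
  rewrite -cardG -(fullS cS) (perm_subsums (perm_rem_cons Sck)) subsums_nseq.
  exact: card_multiples_le.
have kE : k.+1 = p by apply/eqP; rewrite eqn_leq pk kp.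
case/minimal_zero_sumP: (minS) => + _; rewrite (perm_sigma Sck) sigma_cons sigma_nseq.
rewrite -[k]/(k.+1.-1) kE (mulrn_predp p_pr cardG) => /eqP; rewrite subr_eq0.
by apply/negP.
Qed.

Lemma double_size_le : ~~ constant S -> (2 * size S <= p + 2)%N.
Proof.
move=> ncS; have p2 := prime_gt1 p_pr.
have [S4 | S3] := ltnP 3 (size S); last first.
  have [S2 | S2] := leqP (size S) 2; first by lia.
  have {S2 S3}sizeS : size S = 3%N by apply/eqP; rewrite eqn_leq S3 S2.
  case/nonconstantP: ncS => a [b [Sa Sb ab]].
  have remb : b \in rem a S by rewrite rem_mem // eq_sym.
  have SabR : perm_eq S ((a :: nseq 1 b) ++ rem b (rem a S)).
    by rewrite (permPl (perm_to_rem Sa)) perm_cons perm_to_rem.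
  have R0 : rem b (rem a S) != [::].
    by rewrite -size_eq0 !size_rem // sizeS.
  have := card_subsums_cons_nseq SabR R0 ab isT.
  have := subset_leq_card (subsetT (subsums (a :: nseq 1 b))); rewrite cardG sizeS.
  by move=> le_p /leq_trans/(_ le_p); lia.
have [g [x [Sg gx_rem gx ncU]]] := nonconstant_rem2 S4 ncS not_perm_cons_nseq.
set U := rem x (rem g S) in ncU *.
have SgxU : perm_eq S (g :: x :: U).
  by rewrite (permPl (perm_to_rem Sg)) perm_cons perm_to_rem.
have SU : perm_eq S (U ++ [:: x; g]).
  by rewrite (permPl SgxU) (perm_catCA [:: g] [:: x]) perm_sym perm_catC.
have MU := card_subsums_part SU isT ncU.
have gU : - g \notin subsums U.
  have SgU : perm_eq S ((g :: U) ++ [:: x]).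
    by rewrite (permPl SgxU) perm_cons perm_sym perm_catC.
  by case/zero_sum_free_cons: (zero_sum_free_part minS SgU isT).
have xU : - x \notin subsums U.
  have SxU : perm_eq S ((x :: U) ++ [:: g]).
    by rewrite (permPl SgxU) (perm_catCA [:: g] [:: x]) perm_cons perm_sym perm_catC.
  by case/zero_sum_free_cons: (zero_sum_free_part minS SxU isT).
have gx' : - g != - x by rewrite eqr_opp.
have := card_avoid2 cardG gx' gU xU; rewrite -addn2 => /(leq_trans (leq_add MU (leqnn 2))).
by move=> le_p; rewrite (perm_size SgxU) /= !mulnS addnC leq_add2r addnC.
Qed.

Lemma exists_rem_card_subsums T R : perm_eq S (T ++ R) -> ~~ constant T ->
  exists2 x, x \in T & (2 * size (rem x T) <= #|subsums (rem x T)|)%N.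
Proof.
move=> STR ncT; case/nonconstantP: (ncT) => a [b [Ta Tb ab]].
case: R STR => [|r R] STR.
  rewrite cats0 in STR; exists a => //.
  have STa := perm_trans STR (perm_to_rem Ta).
  have aS : a \in S by rewrite (perm_mem STa) mem_head.
  rewrite -(perm_subsums (perm_rem_cons STa)) fullS // cardG.
  have ncS : ~~ constant S by apply/nonconstantP; exists a, b; rewrite !(perm_mem STR).
  have := double_size_le ncS; rewrite (perm_size STR) size_rem //; lia.
have [T3 | T2] := ltnP 2 (size T).
  have [x Tx ncx] := nonconstant_rem T3 ncT; exists x => //.
  apply: (card_subsums_part (R := x :: r :: R)) ncx => //.
  exact: perm_trans STR (perm_trans (perm_cons_rem _ Tx) (perm_cons_cat x (perm_refl _))).
have zsfT := zero_sum_free_part minS STR isT.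
case: T Ta Tb T2 ncT zsfT {STR} => [|t1 [|t2 [|? ?]]] // Ta Tb _ ncT zsfT.
exists t1; first exact: mem_head.
have -> : rem t1 [:: t1; t2] = [:: t2] by rewrite /= eqxx.
apply/card_gt1P; exists 0, t2.
have t20 : t2 != 0 by apply: zero_sum_free_neq0 zsfT _; rewrite !inE eqxx orbT.
split; [exact: subsums0 | | by rewrite eq_sym].
by have := @mem_subsums _ [:: t2] [:: t2] [::] (perm_refl _); rewrite /sigma big_seq1.
Qed.

End UnsplittableSubsums.

Theorem lemma2p10 (p : nat) (G : finZmodType) (S T : seq G) :
  prime p -> #|[set: G]| = p ->
  unsplittable S -> subseqm T S -> (2 <= #|supp T|)%N ->
  exists2 g : G, g \in supp T &
    (2 * size (rem g T) - 1 <= #|Sigma (rem g T)|)%N.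
Proof.
move=> p_pr cardG unsplS subTS suppT.
have [R STR] := subseqm_perm_cat subTS.
have ncT : ~~ constant T.
  case/card_gt1P: suppT => a [b]; rewrite !inE => -[Ta Tb ab].
  by apply/nonconstantP; exists a, b.
have [x Tx le_rem] := exists_rem_card_subsums p_pr cardG unsplS.1
  (fun h => unsplittable_subsums_rem unsplS) STR ncT.
exists x; first by rewrite inE.
by have := card_subsums_Sigma (rem x T); lia.
Qed.
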